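(* Let $n\ge 2$, let $\mathcal{L}\subset\mathbb{R}^n$ be a tame lattice with Lagrangian basis $\{\mathbf{e}_1,\dots,\mathbf{e}_n\}$, $\mathbf{v}_1=\sum_i\mathbf{e}_i$, $a:=\langle\mathbf{e}_1,\mathbf{e}_1\rangle$, $h:=-\langle\mathbf{e}_1,\mathbf{e}_2\rangle$. Let $r,s$ be integers with $0\ne|r|<n$, $m=r+sn$, and suppose $$\frac{na-1}{n^2-1}\le\left(\frac{m}{r}\right)^2\le\frac{(na-1)(n+1)}{n-1}.$$ Then $$\delta(\mathcal{L}_{\mathbf{v}_1}^{(r,s)})=\frac{((na-1)r^2+m^2)^{n/2}}{2^n n^{n/2}(a+h)^{\frac{n-1}{2}}|mr^{n-1}|}.$$
   Context: Tame lattice: a full-rank lattice $\mathcal{L}\subset\mathbb{R}^n$ with a basis $\{\mathbf{e}_1,\dots,\mathbf{e}_n\}$ (Lagrangian basis) and nonzero $\mathbf{v}_1\in\mathcal{L}\cap\mathcal{L}^*$ such that $\sum_i\mathbf{e}_i=\mathbf{v}_1$, $\langle\mathbf{e}_i,\mathbf{v}_1\rangle=1$, $\langle\mathbf{e}_i,\mathbf{e}_i\rangle=a$, $\langle\mathbf{e}_i,\mathbf{e}_j\rangle=-h$ ($i\ne j$); then $a-h(n-1)=1$. $\mathcal{L}^{(r,s)}_{\mathbf{v}_1}$ is the image of $\mathcal{L}$ under $\mathbf{x}\mapsto r\mathbf{x}+s\langle\mathbf{x},\mathbf{v}_1\rangle\mathbf{v}_1$. The center density of a full-rank lattice $\Lambda\subset\mathbb{R}^n$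 is $\delta(\Lambda)=\lambda_1(\Lambda)^n/(2^n\operatorname{vol}(\Lambda))$, where $\lambda_1$ is the minimal nonzero vector norm. *)

From HB Require Import structures.
From mathcomp Require Import all_boot all_order all_algebra.
From mathcomp Require Import all_classical all_reals all_analysis.
Set Implicit Arguments. Unset Strict Implicit. Unset Printing Implicit Defensive.
Import Order.TTheory GRing.Theory Num.Theory.
Local Open Scope ring_scope.
Local Open Scope classical_set_scope.

Section Lattices.
Variables (R : realType) (n : nat).

Definition dotp (x y : 'rV[R]_n) : R := \sum_(i < n) x 0 i * y 0 i.
Definition vnorm (x : 'rV[R]_n) : R := Num.sqrt (dotp x x).

Definition lattice_of (B : 'M[R]_n) : set 'rV[R]_n :=
  [set x | exists z : 'rV[int]_n, x = map_mx (fun k : int => k%:~R) z *m B].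

Definition is_lattice_basis (L : set 'rV[R]_n) (B : 'M[R]_n) : Prop :=
  \det B != 0 /\ L = lattice_of B.

Definition full_rank_lattice (L : set 'rV[R]_n) : Prop :=
  exists B, is_lattice_basis L B.

Definition dual_lattice (L : set 'rV[R]_n) : set 'rV[R]_n :=
  [set x | forall y, L y -> exists z : int, dotp x y = z%:~R].

(* covolume: |det B| for a basis B of L (independent of the chosen basis) *)
Definition covol (L : set 'rV[R]_n) : R :=
  `|\det (xget 0 (is_lattice_basis L))|.

Definition lambda1 (L : set 'rV[R]_n) : R :=
  inf [set vnorm x | x in L `\ 0].

Definition center_density (L : set 'rV[R]_n) : R :=
  lambda1 L ^+ n / (2 ^+ n * covol L).

Definition tame_lattice (L : set 'rV[R]_n) (E : 'M[R]_n) (v1 : 'rV[R]_n)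
  (a h : R) : Prop :=
  [/\ is_lattice_basis L E, v1 != 0, L v1 /\ dual_lattice L v1,
      \sum_(i < n) row i E = v1 &
      forall i j : 'I_n,
        dotp (row i E) v1 = 1 /\
        dotp (row i E) (row j E) = (if i == j then a else - h)].

Definition twist (r s : int) (v1 x : 'rV[R]_n) : 'rV[R]_n :=
  r%:~R *: x + (s%:~R * dotp x v1) *: v1.

Definition twisted_lattice (r s : int) (v1 : 'rV[R]_n) (L : set 'rV[R]_n)
  : set 'rV[R]_n := twist r s v1 @` L.

End Lattices.

From HB Require Import structures.
From mathcomp Require Import all_boot all_order all_algebra.
From mathcomp Require Import all_classical all_reals all_analysis.
From mathcomp Require Import ring lra zify.
Set Implicit Arguments. Unset Strict Implicit. Unset Printing Implicit Defensive.
Import Order.TTheory GRing.Theory Num.Theory.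
Local Open Scope ring_scope.
Local Open Scope classical_set_scope.

(* Write the twist x |-> r x + s <x,v1> v1 as right
   multiplication by the matrix  T = r I + s v1^T v1.  Then:
   - covolume: the rows of E *m T form a basis of the twisted lattice, and
     det T = r^(n-1) (r + s <v1,v1>) = m r^(n-1) by the matrix determinant
     lemma; the Gram matrix E E^T = (a+h) I - h J gives
     det E ^ 2 = (a+h)^(n-1), using the tameness relation a + h - h n = 1;
   - minimal norm: for x = sum z_i e_i with z integral, q = sum z_i^2 and
     t = sum z_i, one has  n |T x|^2 = n A q + t^2 (M - A)  with
     A = (a+h) r^2 and M = m^2.  The hypothesis on (m/r)^2 says exactly
     A <= (n+1) M and M <= (n+1) A, and an elementary inequality using
     t^2 <= n q, t^2 <= q^2, q >= 1 and (t <> 0 or q >= 2) shows that this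
     is minimised at x = e_1, where n |T e_1|^2 = (n-1) A + M.
   The center density formula then follows by rewriting real powers
   x `^ (k/2) as (sqrt x)^k. *)

Lemma det_1_rank1 (R : comRingType) n (u : 'M[R]_(n, 1)) (v : 'M[R]_(1, n)) :
  \det (1%:M + u *m v) = 1 + (v *m u) 0 0.
Proof.
set A := block_mx 1%:M u (- v) 1%:M : 'M[R]_(n + 1).
set B := block_mx 1%:M 0 v 1%:M : 'M[R]_(n + 1).
have AB : A *m B = block_mx (1%:M + u *m v) u 0 1%:M.
  by rewrite /A /B mulmx_block !mul1mx !mulmx1 add0r addNr mulmx0 add0r.
have BA : B *m A = block_mx 1%:M u 0 (v *m u + 1%:M).
  by rewrite /A /B mulmx_block !mul1mx !mulmx1 mul0mx !addr0 subrr.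
have detB : \det B = 1 by rewrite /B det_lblock !det1 mulr1.
have dAB := congr1 determinant AB; have dBA := congr1 determinant BA.
rewrite det_mulmx detB mulr1 det_ublock det1 mulr1 in dAB.
rewrite det_mulmx detB mul1r det_ublock det1 mul1r in dBA.
by rewrite -dAB dBA det_mx11 mxE addrC mxE eqxx mulr1n.
Qed.

Lemma det_scalar_rank1 (R : fieldType) n (c : R) (u : 'M[R]_(n, 1))
    (v : 'M[R]_(1, n)) : (0 < n)%N -> c != 0 ->
  \det (c%:M + u *m v) = c ^+ n.-1 * (c + (v *m u) 0 0).
Proof.
case: n u v => // n u v _ c0.
have -> : c%:M + u *m v = c *: (1%:M + (c^-1 *: u) *m v).
  by rewrite scalerDr scalemx1 -scalemxAl scalerA divff // scale1r.
rewrite detZ det_1_rank1 -scalemxAr mxE exprSr -mulrA; congr (_ * _).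
by rewrite mulrDr mulr1 mulrA divff // mul1r.
Qed.

Section Covolume.
Variables (R : realType) (n : nat).

Lemma lattice_of_sub (B1 B2 : 'M[R]_n) : lattice_of B2 `<=` lattice_of B1 ->
  exists U : 'M[int]_n, B2 = map_mx (fun k : int => k%:~R) U *m B1.
Proof.
move=> sub.
have : forall i : 'I_n, exists z : 'rV[int]_n,
    row i B2 = map_mx (fun k : int => k%:~R) z *m B1.
  move=> i; apply: sub; exists (delta_mx 0 i).
  by rewrite rowE (map_delta_mx (intr : {rmorphism int -> R})).
case/choice => f hf; exists (\matrix_(i, j) f i 0 j).
apply/row_matrixP => i; rewrite hf row_mul; congr (_ *m _).
by apply/rowP => j; rewrite !mxE.
Qed.

(* Two bases of the same lattice differ by a unimodular integer matrix, so
   |det B| does not depend on the basis. *)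
Lemma basis_det_norm (L : set 'rV[R]_n) B1 B2 :
  is_lattice_basis L B1 -> is_lattice_basis L B2 -> `|\det B1| = `|\det B2|.
Proof.
move=> [d1 e1] [d2 e2].
have det_int (U : 'M[int]_n) :
    \det (map_mx (fun k : int => (k%:~R : R)) U) = (\det U)%:~R.
  by rewrite (det_map_mx (intr : {rmorphism int -> R})).
have [U hU] : exists U : 'M[int]_n, B2 = map_mx (fun k : int => k%:~R) U *m B1.
  by apply: lattice_of_sub; rewrite -e1 -e2.
have [V hV] : exists V : 'M[int]_n, B1 = map_mx (fun k : int => k%:~R) V *m B2.
  by apply: lattice_of_sub; rewrite -e1 -e2.
have dU : \det B2 = (\det U)%:~R * \det B1 by rewrite {1}hU det_mulmx det_int.
have dV : \det B1 = (\det V)%:~R * \det B2 by rewrite {1}hV det_mulmx det_int.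
have /eqP : (\det V * \det U)%:~R = 1 :> R.
  by apply: (mulIf d1); rewrite mul1r {2}dV dU mulrA intrM.
rewrite -[1]/(1%:~R) eqr_int => /eqP /(congr1 absz).
rewrite abszM => /eqP; rewrite muln_eq1 => /andP [_ /eqP absU].
by rewrite dU normrM -intr_norm -abszE absU mul1r.
Qed.

Lemma covol_basis (L : set 'rV[R]_n) B :
  is_lattice_basis L B -> covol L = `|\det B|.
Proof. by move=> bB; rewrite /covol (basis_det_norm (xgetPex 0 (ex_intro _ _ bB)) bB). Qed.

End Covolume.

Section InnerProduct.
Variables (R : realType) (n : nat).
Implicit Types x y z : 'rV[R]_n.

Lemma dotpC x y : dotp x y = dotp y x.
Proof. by apply: eq_bigr => i _; rewrite mulrC. Qed.

Lemma dotpDl x y z : dotp (x + y) z = dotp x z + dotp y z.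
Proof. by rewrite /dotp -big_split; apply: eq_bigr => i _; rewrite mxE mulrDl. Qed.

Lemma dotpZl k x y : dotp (k *: x) y = k * dotp x y.
Proof. by rewrite /dotp mulr_sumr; apply: eq_bigr => i _; rewrite mxE mulrA. Qed.

Lemma dotp0l y : dotp 0 y = 0.
Proof. by rewrite -(scale0r 0) dotpZl mul0r. Qed.

Lemma dotp_suml (I : finType) (F : I -> 'rV[R]_n) y :
  dotp (\sum_i F i) y = \sum_i dotp (F i) y.
Proof.
rewrite /dotp exchange_big /=; apply: eq_bigr => j _.
by rewrite summxE mulr_suml.
Qed.

Lemma mulmx_tr_dotp x y : x *m y^T = (dotp x y)%:M.
Proof.
apply/matrixP => i j; rewrite !ord1 !mxE eqxx mulr1n.
by apply: eq_bigr => k _; rewrite mxE.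
Qed.

Lemma dotp_ge0 x : 0 <= dotp x x.
Proof. by apply: sumr_ge0 => i _; rewrite -expr2 sqr_ge0. Qed.

Lemma dotp_eq0 x : (dotp x x == 0) = (x == 0).
Proof.
apply/idP/eqP => [|->]; last by rewrite dotp0l.
rewrite /dotp psumr_eq0 => [/allP x0|i _]; last by rewrite -expr2 sqr_ge0.
apply/rowP => i; rewrite mxE; apply/eqP.
by have := x0 i (mem_index_enum i); rewrite -expr2 sqrf_eq0.
Qed.

Lemma lambda1_attained (L : set 'rV[R]_n) y0 : L y0 -> y0 != 0 ->
  (forall y, L y -> y != 0 -> dotp y0 y0 <= dotp y y) ->
  lambda1 L = vnorm y0.
Proof.
move=> Ly0 y0nz y0min; rewrite /lambda1; set S := [set vnorm x | x in _ `\ 0].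
have Sy0 : S (vnorm y0) by exists y0 => //; split => //; apply/eqP.
have lbS : lbound S (vnorm y0).
  move=> _ [y [Ly /eqP ynz] <-]; rewrite /vnorm ler_sqrt ?dotp_ge0 //.
  exact: y0min.
apply/eqP; rewrite eq_le; apply/andP; split.
  exact: (ge_inf (ex_intro _ _ lbS)).
by apply: lb_le_inf => //; exists (vnorm y0).
Qed.

End InnerProduct.

Section GramCombinations.
Variables (R : realType) (n : nat) (E : 'M[R]_n) (v1 : 'rV[R]_n) (a h : R).
Hypothesis dot_v1 : forall i : 'I_n, dotp (row i E) v1 = 1.
Hypothesis gram : forall i j : 'I_n,
  dotp (row i E) (row j E) = (if i == j then a else - h).

Lemma dotp_comb_v1 (w : 'I_n -> R) :
  dotp (\sum_i w i *: row i E) v1 = \sum_i w i.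
Proof. by rewrite dotp_suml; apply: eq_bigr => i _; rewrite dotpZl dot_v1 mulr1. Qed.

(* |sum w_i e_i|^2 = (a+h) sum w_i^2 - h (sum w_i)^2, since the Gram matrix
   of the e_i is (a+h) I - h J. *)
Lemma dotp_comb (w : 'I_n -> R) :
  dotp (\sum_i w i *: row i E) (\sum_i w i *: row i E) =
  (a + h) * \sum_i w i ^+ 2 - h * (\sum_i w i) ^+ 2.
Proof.
rewrite dotp_suml.
transitivity (\sum_i w i * ((a + h) * w i - h * \sum_j w j)).
  apply: eq_bigr => i _; rewrite dotpZl dotpC dotp_suml; congr (_ * _).
  transitivity (\sum_j ((a + h) * ((i == j)%:R * w j) - h * w j)).
    apply: eq_bigr => j _; rewrite dotpZl gram eq_sym.
    by case: eqP => _; rewrite ?mulr1n ?mulr0n; ring.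
  rewrite sumrB -!mulr_sumr (bigD1 i) //= eqxx mul1r big1 ?addr0 // => j.
  by rewrite eq_sym => /negbTE ->; rewrite mul0r.
rewrite (eq_bigr (fun i => (a + h) * w i ^+ 2 - (h * \sum_j w j) * w i)).
  by rewrite sumrB -!mulr_sumr expr2 mulrA.
by move=> i _; ring.
Qed.

End GramCombinations.

Lemma sum_ge_term (I : finType) (F : I -> int) i :
  (forall j, 0 <= F j) -> F i <= \sum_j F j.
Proof.
move=> F0; rewrite (bigD1 i) //= -[X in X <= _]addr0 lerD2l.
by apply: sumr_ge0 => j _.
Qed.

Lemma norm_le_sqr (x : int) : `|x| <= x ^+ 2.
Proof. by rewrite expr2; case: (ltrP x 0) => x0; [rewrite ltr0_norm | rewrite ger0_norm]; nia. Qed.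

(* x^2 - x = x (x - 1) is a nonnegative integer, and it is 0 or at least 2. *)
Lemma sqr_sub_self_ge0 (x : int) : 0 <= x ^+ 2 - x.
Proof.
rewrite expr2; have : x <= 0 \/ 1 <= x by lia.
by case=> ?; nia.
Qed.

Lemma sqr_sub_self_ge2 (x : int) : x ^+ 2 - x != 0 -> 2 <= x ^+ 2 - x.
Proof.
rewrite expr2; have : x <= -1 \/ x = 0 \/ x = 1 \/ 2 <= x by lia.
by case=> [x1|[->|[->|x2]]] //; nia.
Qed.

Section IntegerVectors.
Variables (n : nat) (z : 'I_n -> int).
Let q := \sum_i z i ^+ 2.
Let t := \sum_i z i.

Lemma sum_sqr_ge1 i : z i != 0 -> 1 <= q.
Proof.
move=> zi0; apply: le_trans (@sum_ge_term _ (fun j => z j ^+ 2) i _) => [|j]; last exact: sqr_ge0.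
by move: zi0; lia.
Qed.

(* Cauchy-Schwarz against the all-ones vector: t^2 <= n q. *)
Lemma sqr_sum_le_n_sum_sqr : t ^+ 2 <= n%:R * q.
Proof.
have : 0 <= \sum_i \sum_j (z i - z j) ^+ 2.
  by apply: sumr_ge0 => i _; apply: sumr_ge0 => j _; apply: sqr_ge0.
suff -> : \sum_i \sum_j (z i - z j) ^+ 2 = 2 * (n%:R * q - t ^+ 2).
  by rewrite pmulr_rge0 // subr_ge0.
transitivity (\sum_i (z i ^+ 2 * n%:R - 2 * z i * t + q)).
  apply: eq_bigr => i _.
  rewrite (eq_bigr (fun j => z i ^+ 2 - 2 * z i * z j + z j ^+ 2)) => [|j _]; last by ring.
  by rewrite big_split sumrB /= sumr_const card_ord -[_ *+ n]mulr_natr -mulr_sumr.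
rewrite big_split sumrB /= -mulr_suml sumr_const card_ord -[q *+ n]mulr_natr -/q.
by rewrite -mulr_suml -mulr_sumr -/t; ring.
Qed.

(* |t| <= sum |z_i| <= sum z_i^2 = q, hence t^2 <= q^2. *)
Lemma sqr_sum_le_sqr_sum_sqr : t ^+ 2 <= q ^+ 2.
Proof.
have tq : `|t| <= q.
  apply: le_trans (ler_norm_sum _ _ _) _; apply: ler_sum => i _.
  exact: norm_le_sqr.
rewrite -[t ^+ 2](real_normK (num_real t)) !expr2.
by apply: ler_pM; rewrite ?normr_ge0.
Qed.

(* If t = 0 then q >= 2: q - t = sum z_i (z_i - 1) is a sum of terms that are
   each 0 or at least 2. *)
Lemma sum_sqr_ge2 i : z i != 0 -> t = 0 -> 2 <= q.
Proof.
move=> zi0 t0.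
have qt : q - t = \sum_j (z j ^+ 2 - z j) by rewrite sumrB.
case: (pickP (fun j => z j ^+ 2 - z j != 0)) => [j zj | zall].
  have zj2 : 2 <= z j ^+ 2 - z j by apply: sqr_sub_self_ge2.
  have : z j ^+ 2 - z j <= q - t.
    by rewrite qt; apply: sum_ge_term => k; apply: sqr_sub_self_ge0.
  by rewrite t0 subr0; lia.
have : q - t = 0 by rewrite qt big1 // => j _; apply/eqP/negbFE/zall.
by have := @sum_sqr_ge1 i zi0; rewrite t0; lia.
Qed.

End IntegerVectors.

(* The elementary inequality behind the minimality of e_1.  With A, M > 0
   comparable up to the factor N + 1, and (q, T) = (sum z_i^2, (sum z_i)^2)
   for a nonzero integer vector z, the value N A q + T (M - A) is at least
   its value (N - 1) A + M at q = T = 1. *)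
Lemma twisted_form_lower_bound (R : realFieldType) (N A M q T : R) :
  2 <= N -> 0 < A -> 0 <= M -> A <= (N + 1) * M -> M <= (N + 1) * A ->
  0 <= T -> T <= N * q -> T <= q ^+ 2 -> 1 <= q -> (1 <= T \/ 2 <= q) ->
  (N - 1) * A + M <= N * A * q + T * (M - A).
Proof.
move=> N2 A0 M0 AM MA T0 TNq Tq2 q1 Tq.
case: (lerP A M) => [le_AM | lt_MA].
  case: Tq => [T1 | q2].
    have : 0 <= (M - A) * (T - 1) by apply: mulr_ge0; lra.
    have : 0 <= N * A * (q - 1) by apply: mulr_ge0; [apply: mulr_ge0|]; lra.
    lra.
  have : 0 <= T * (M - A) by apply: mulr_ge0; lra.
  have : 0 <= N * A * (q - 2) by apply: mulr_ge0; [apply: mulr_ge0|]; lra.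
  lra.
have T_q2 : (A - M) * T <= (A - M) * q ^+ 2 by rewrite ler_pM2l ?subr_gt0.
have T_Nq : (A - M) * T <= (A - M) * (N * q) by rewrite ler_pM2l ?subr_gt0.
case: (lerP q N) => [le_qN | lt_Nq].
  have : 0 <= (q - 1) * (N * A - (A - M) * (q + 1)).
    apply: mulr_ge0; first lra.
    have : (A - M) * (q + 1) <= (A - M) * (N + 1) by rewrite ler_pM2l ?subr_gt0 //; lra.
    lra.
  rewrite expr2 in T_q2; lra.
have : 0 <= N * M * (q - N) by apply: mulr_ge0; [apply: mulr_ge0|]; lra.
have : 0 <= (N - 1) * ((N + 1) * M - A) by apply: mulr_ge0; lra.
lra.
Qed.

Section Twist.
Variables (R : realType) (n : nat) (r s : int) (v1 : 'rV[R]_n).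

Definition twist_mx : 'M[R]_n := r%:~R%:M + s%:~R *: (v1^T *m v1).

Lemma twistE x : twist r s v1 x = x *m twist_mx.
Proof.
rewrite /twist /twist_mx mulmxDr mul_mx_scalar -scalemxAr mulmxA.
by rewrite mulmx_tr_dotp mul_scalar_mx scalerA.
Qed.

Lemma twisted_lattice_of (B : 'M[R]_n) :
  twisted_lattice r s v1 (lattice_of B) = lattice_of (B *m twist_mx).
Proof.
apply/seteqP; split => y.
  by case=> x [z ->] <-; exists z; rewrite twistE mulmxA.
case=> z ->; exists (map_mx (fun k : int => k%:~R) z *m B); first by exists z.
by rewrite twistE mulmxA.
Qed.

Lemma det_twist_mx : (0 < n)%N -> r != 0 ->
  \det twist_mx = r%:~R ^+ n.-1 * (r%:~R + s%:~R * dotp v1 v1).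
Proof.
move=> n0 r0; rewrite /twist_mx scalemxAl det_scalar_rank1 ?intr_eq0 //.
by rewrite -scalemxAr mxE mulmx_tr_dotp mxE eqxx mulr1n.
Qed.

Lemma dotp_twist x : dotp (twist r s v1 x) (twist r s v1 x) =
  r%:~R ^+ 2 * dotp x x +
  (2 * r%:~R * s%:~R + s%:~R ^+ 2 * dotp v1 v1) * dotp x v1 ^+ 2.
Proof.
rewrite /twist !dotpDl ![dotp _ (_ + _)]dotpC !dotpDl !dotpZl.
by rewrite ![dotp _ (_ *: _)]dotpC !dotpZl [dotp v1 x]dotpC; ring.
Qed.

End Twist.

Section TameLattice.
Variables (R : realType) (n : nat) (L : set 'rV[R]_n) (E : 'M[R]_n).
Variables (v1 : 'rV[R]_n) (a h : R).
Hypothesis n2 : (2 <= n)%N.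
Hypothesis tame : tame_lattice L E v1 a h.

Let n0 : (0 < n)%N. Proof. exact: leq_trans n2. Qed.

Lemma tame_dot_v1 i : dotp (row i E) v1 = 1.
Proof. by case: tame => _ _ _ _ /(_ i i) []. Qed.

Lemma tame_gram i j : dotp (row i E) (row j E) = (if i == j then a else - h).
Proof. by case: tame => _ _ _ _ /(_ i j) []. Qed.

Lemma tame_lattice_of : L = lattice_of E.
Proof. by case: tame => -[]. Qed.

Lemma tame_combination x : L x ->
  exists z : 'I_n -> int, x = \sum_i (z i)%:~R *: row i E.
Proof.
rewrite tame_lattice_of => -[z ->]; exists (fun i => z 0 i).
by rewrite mulmx_sum_row; apply: eq_bigr => i _; rewrite mxE.
Qed.

Lemma tame_row_in i : L (row i E).
Proof.
rewrite tame_lattice_of; exists (delta_mx 0 i).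
by rewrite rowE (map_delta_mx (intr : {rmorphism int -> R})).
Qed.

(* <v1, v1> = n, since v1 = sum e_i and <e_i, v1> = 1. *)
Lemma tame_v1_norm : dotp v1 v1 = n%:R.
Proof.
have [_ _ _ v1E _] := tame.
by rewrite -{1}v1E dotp_suml (eq_bigr (fun=> 1)) ?sumr_const ?card_ord // => i _; rewrite tame_dot_v1.
Qed.

(* The tameness relation a - (n-1) h = 1, from |v1|^2 = n. *)
Lemma tame_relation : a + h - h * n%:R = 1.
Proof.
have v1E : v1 = \sum_i 1 *: row i E.
  by case: tame => _ _ _ <- _; apply: eq_bigr => i _; rewrite scale1r.
have := @dotp_comb R n E a h tame_gram (fun=> 1).
rewrite -v1E tame_v1_norm (eq_bigr (fun=> 1)) => [|i _]; last by rewrite expr1n.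
rewrite sumr_const card_ord -[1 *+ n]mulr_natr mul1r => nE.
have /eqP : n%:R * (a + h - h * n%:R - 1) = 0 :> R.
  by apply/eqP; rewrite mulrBr mulr1 subr_eq0 [X in _ == X]nE; apply/eqP; ring.
by rewrite mulf_eq0 pnatr_eq0 (gtn_eqF n0) /= subr_eq0 => /eqP.
Qed.

(* n a - 1 = (n - 1)(a + h): the form in which the tameness relation enters
   the bounds on (m/r)^2. *)
Lemma tame_relation_na : n%:R * a - 1 = (n%:R - 1) * (a + h).
Proof.
have := tame_relation; move: (n%:R) => N hN.
by rewrite -[in LHS]hN; ring.
Qed.

(* a + h = |e_1 - e_2|^2 / 2 > 0, as e_1 != e_2 (E is invertible). *)
Lemma tame_ah_pos : 0 < a + h.
Proof.
pose i0 : 'I_n := Ordinal n0; pose i1 : 'I_n := Ordinal n2.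
have d : dotp (row i0 E - row i1 E) (row i0 E - row i1 E) = 2 * (a + h).
  rewrite -scaleN1r !dotpDl ![dotp _ (_ + _)]dotpC !dotpDl !dotpZl.
  have i10 : (i1 == i0) = false by [].
  by rewrite ![dotp _ ((-1) *: _)]dotpC !dotpZl !tame_gram !eqxx i10; ring.
have e01 : row i0 E - row i1 E != 0.
  have [[/eqP dE _] _ _ _ _] := tame.
  rewrite subr_eq0; apply/eqP => e01; apply: dE.
  apply: (determinant_alternate (isT : i0 != i1)) => j.
  by have := congr1 (fun M : 'rV_n => M 0 j) e01; rewrite !mxE.
have : 0 < dotp (row i0 E - row i1 E) (row i0 E - row i1 E).
  by rewrite lt0r dotp_eq0 e01 dotp_ge0.
by rewrite d (pmulr_rgt0 _ (ltr0Sn R 1)).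
Qed.

(* The Gram matrix E E^T = (a+h) I - h J has determinant (a+h)^(n-1). *)
Lemma tame_det : `|\det E| = Num.sqrt (a + h) ^+ n.-1.
Proof.
have ah0 : a + h != 0 by rewrite gt_eqF ?tame_ah_pos.
have gramE : E *m E^T = (a + h)%:M +
    ((- h) *: (const_mx 1 : 'cV[R]_n)) *m (const_mx 1 : 'rV[R]_n).
  apply/matrixP => i j; rewrite !mxE big_ord1 !mxE mulr1.
  rewrite (eq_bigr (fun k => row i E 0 k * row j E 0 k)) => [|k _]; last by rewrite !mxE.
  by rewrite [\sum_k _]tame_gram; case: eqP => _; rewrite ?mulr1n ?mulr0n; ring.
have detE2 : \det E ^+ 2 = (a + h) ^+ n.-1.
  have := congr1 determinant gramE.
  rewrite det_mulmx det_tr -expr2 => ->; rewrite det_scalar_rank1 //.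
  rewrite -scalemxAr mxE mxE (eq_bigr (fun=> 1)) => [|k _]; last by rewrite !mxE mul1r.
  by rewrite sumr_const card_ord -[1 *+ n]mulr_natr mul1r mulNr tame_relation mulr1.
apply/eqP; rewrite -(@eqrXn2 _ 2) // ?sqrtr_ge0 ?exprn_ge0 //.
rewrite real_normK ?num_real // detE2 -exprM mulnC exprM sqr_sqrtr //.
exact: ltW tame_ah_pos.
Qed.

Variables (r s : int).
Hypothesis r0 : r != 0.

Local Notation m := (r + s * n%:Z).
Local Notation A := ((a + h) * r%:~R ^+ 2).
Local Notation M := ((m%:~R : R) ^+ 2).
Local Notation T := (twist r s v1).

Lemma twisted_norm_comb (w : 'I_n -> R) :
  let x := \sum_i w i *: row i E in
  n%:R * dotp (T x) (T x) =
    n%:R * A * \sum_i w i ^+ 2 + (\sum_i w i) ^+ 2 * (M - A).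
Proof.
rewrite /= dotp_twist (dotp_comb tame_gram) (dotp_comb_v1 tame_dot_v1).
have aE : a = 1 + h * n%:R - h.
  by have := tame_relation; move: (n%:R) => N <-; ring.
by rewrite tame_v1_norm intrD intrM pmulrn aE; ring.
Qed.

Lemma twisted_row_norm i :
  n%:R * dotp (T (row i E)) (T (row i E)) = (n%:R * a - 1) * r%:~R ^+ 2 + M.
Proof.
have eiE : row i E = \sum_j (i == j)%:R *: row j E.
  rewrite (bigD1 i) //= eqxx scale1r big1 ?addr0 // => j.
  by rewrite eq_sym => /negbTE ->; rewrite scale0r.
have sum_delta : \sum_j ((i == j)%:R : R) = 1.
  rewrite (bigD1 i) //= eqxx big1 ?addr0 // => j.
  by rewrite eq_sym => /negbTE ->.
have sqr_delta j : ((i == j)%:R : R) ^+ 2 = (i == j)%:R.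
  by case: eqP; rewrite ?expr1n ?expr0n.
have := twisted_norm_comb (fun j => (i == j)%:R).
rewrite /= -eiE (eq_bigr _ (fun j _ => sqr_delta j)) sum_delta => ->.
by rewrite tame_relation_na; ring.
Qed.

Lemma twisted_row_norm_gt0 i : 0 < dotp (T (row i E)) (T (row i E)).
Proof.
have N0 : 0 < n%:R :> R by rewrite ltr0n.
rewrite -(pmulr_rgt0 _ N0) twisted_row_norm tame_relation_na.
apply: ltr_pwDl; last exact: sqr_ge0.
rewrite mulr_gt0 ?exprn_even_gt0 ?intr_eq0 // mulr_gt0 ?tame_ah_pos //.
by rewrite subr_gt0 (ltr_nat R 1 n).
Qed.

Hypothesis ratio :
  (n%:R * a - 1) / (n%:R ^+ 2 - 1) <= (m%:~R / r%:~R) ^+ 2 <=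
    (n%:R * a - 1) * (n%:R + 1) / (n%:R - 1).

Lemma ratio_bounds : A <= (n%:R + 1) * M /\ M <= (n%:R + 1) * A.
Proof.
have N2 : 2 <= n%:R :> R by rewrite (ler_nat R 2 n).
have r2 : 0 < (r%:~R : R) ^+ 2 by rewrite exprn_even_gt0 // intr_eq0.
have N1 : n%:R - 1 != 0 :> R by apply/eqP; lra.
have N1' : 0 < n%:R + 1 :> R by lra.
have NN1 : n%:R ^+ 2 - 1 != 0 :> R by apply/eqP; nra.
case/andP: ratio; rewrite tame_relation_na expr_div_n ler_pdivlMr // ler_pdivrMr //.
have -> : (n%:R - 1) * (a + h) / (n%:R ^+ 2 - 1) * r%:~R ^+ 2 = A / (n%:R + 1).
  by field; rewrite gt_eqF //= NN1.
have -> : (n%:R - 1) * (a + h) * (n%:R + 1) / (n%:R - 1) * r%:~R ^+ 2 =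
    (n%:R + 1) * A by field.
by rewrite ler_pdivrMr // [_ * (_ + 1)]mulrC => lo hi.
Qed.

(* m != 0, since A > 0; the twist is therefore invertible. *)
Lemma twisted_m_neq0 : (m%:~R : R) != 0.
Proof.
apply/eqP => m0; have [AM _] := ratio_bounds; move: AM.
have : 0 < A by rewrite mulr_gt0 ?tame_ah_pos // exprn_even_gt0 // intr_eq0.
by rewrite m0 expr0n /= mulr0; lra.
Qed.

Lemma twisted_min_norm i y : twisted_lattice r s v1 L y -> y != 0 ->
  dotp (T (row i E)) (T (row i E)) <= dotp y y.
Proof.
case=> x /tame_combination [z ->] <- {y} Tx0.
have N2 : 2 <= n%:R :> R by rewrite (ler_nat R 2 n).
have [AM MA] := ratio_bounds.
have [j zj] : exists j, z j != 0.
  apply/existsP; apply: contraR Tx0 => /existsPn z0.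
  rewrite big1 => [|j _]; last by rewrite (eqP (negbNE (z0 j))) scale0r.
  by rewrite /twist dotp0l mulr0 !scale0r scaler0 addr0.
set q := \sum_j z j ^+ 2; set t := \sum_j z j.
rewrite -(ler_pM2l (_ : 0 < n%:R :> R)) ?(lt_le_trans _ N2) //.
rewrite twisted_row_norm tame_relation_na.
have := twisted_norm_comb (fun j => (z j)%:~R); rewrite /= => ->.
rewrite -(eq_bigr _ (fun k _ => rmorphXn _ _ _)) -!rmorph_sum -/q -/t.
rewrite -[(n%:R - 1) * _ * _]mulrA; apply: twisted_form_lower_bound => //.
- by rewrite mulr_gt0 ?tame_ah_pos // exprn_even_gt0 // intr_eq0.
- exact: sqr_ge0.
- exact: sqr_ge0.
- rewrite -rmorphXn -[n%:R]/(n%:~R) -rmorphM ler_int -natz.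
  exact: sqr_sum_le_n_sum_sqr.
- by rewrite -!rmorphXn ler_int; exact: sqr_sum_le_sqr_sum_sqr.
- by rewrite -(rmorph1 intr) ler_int; exact: sum_sqr_ge1 zj.
- have [t0|t0] := eqVneq t 0.
    by right; rewrite -[2]/(2%:~R : R) ler_int; exact: sum_sqr_ge2 zj t0.
  by left; rewrite -rmorphXn -(rmorph1 intr) ler_int expr2; move: t0; nia.
Qed.

Lemma twisted_lambda1 i :
  lambda1 (twisted_lattice r s v1 L) = vnorm (T (row i E)).
Proof.
apply: lambda1_attained; last exact: twisted_min_norm.
  by exists (row i E) => //; exact: tame_row_in.
by rewrite -dotp_eq0 gt_eqF ?twisted_row_norm_gt0.
Qed.

Lemma twisted_covol :
  covol (twisted_lattice r s v1 L) = `|\det E| * `|m%:~R * r%:~R ^+ n.-1|.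
Proof.
have detT : \det (twist_mx r s v1) = m%:~R * r%:~R ^+ n.-1.
  by rewrite det_twist_mx // tame_v1_norm intrD intrM pmulrn mulrC.
have [[dE _] _ _ _ _] := tame.
rewrite (@covol_basis _ _ _ (E *m twist_mx r s v1)); first by rewrite det_mulmx normrM detT.
split; last by rewrite tame_lattice_of twisted_lattice_of.
by rewrite det_mulmx detT !mulf_neq0 ?twisted_m_neq0 ?expf_neq0 ?intr_eq0.
Qed.

End TameLattice.

Lemma powR_half_nat (R : realType) (x : R) (k : nat) :
  0 <= x -> x `^ (k%:R / 2) = Num.sqrt x ^+ k.
Proof. by move=> x0; rewrite mulrC powRrM powR12_sqrt // powR_mulrn // sqrtr_ge0. Qed.

Theorem mainTheorem3 (R : realType) (n : nat) (L : set 'rV[R]_n)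
  (E : 'M[R]_n) (v1 : 'rV[R]_n) (a h : R) (r s : int) :
  (2 <= n)%N ->
  tame_lattice L E v1 a h ->
  r != 0 -> `|r| < n%:Z ->
  let m : int := r + s * n%:Z in
  (n%:R * a - 1) / (n%:R ^+ 2 - 1) <= (m%:~R / r%:~R) ^+ 2 <=
    (n%:R * a - 1) * (n%:R + 1) / (n%:R - 1) ->
  center_density (twisted_lattice r s v1 L) =
    ((n%:R * a - 1) * r%:~R ^+ 2 + m%:~R ^+ 2) `^ (n%:R / 2) /
    (2 ^+ n * n%:R `^ (n%:R / 2) * (a + h) `^ ((n%:R - 1) / 2)
       * `|m%:~R * r%:~R ^+ n.-1|).
Proof.
move=> n2 tame r0 _ m ratio.
have n0 : (0 < n)%N by apply: leq_trans n2.
pose i0 : 'I_n := Ordinal n0.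
have N0 : 0 < n%:R :> R by rewrite ltr0n.
have T0 := twisted_row_norm_gt0 n2 tame s r0 i0.
have ah0 := tame_ah_pos n2 tame.
have m0 := twisted_m_neq0 n2 tame r0 ratio.
rewrite /center_density (twisted_lambda1 n2 tame r0 ratio i0).
rewrite (twisted_covol n2 tame r0 ratio) (tame_det n2 tame).
rewrite -(twisted_row_norm n2 tame r s i0) powRM ?(ltW N0) ?(ltW T0) //.
rewrite -[n%:R - 1](natrB _ n0) subn1 !powR_half_nat ?(ltW N0) ?(ltW T0) ?(ltW ah0) //.
rewrite /vnorm; field.
by rewrite normr_eq0 (mulf_neq0 m0) ?expf_neq0 ?intr_eq0 ?pnatr_eq0 ?sqrtr_eq0 -?ltNge //.
Qed.
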